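(* Let $G$ be a finite permutation group acting quasi-transitively on a finite set $\Omega$, with $G$-orbits $\Delta_1,\dots,\Delta_r$ where $r>1$. Then for each $i$, $G$ acts on $\Delta_i$ as a primitive $\frac{3}{2}$-transitive permutation group.
   Context: A finite permutation group $G$ on a finite set $\Omega$ is called quasi-transitive if there is a natural number $t>1$ such that $|G_{\alpha\beta}|=t$ for all two-element subsets $\{\alpha,\beta\}\subseteq\Omega$, where $G_{\alpha\beta}$ denotes the pointwise stabiliser of $\alpha$ and $\beta$ in $G$. A group acting on a set $\Delta$ is $\frac{3}{2}$-transitive if it is transitive on $\Delta$ and, for $\alpha\in\Delta$, all orbits of the point stabiliser $G_\alpha$ on $\Delta\setminus\{\alpha\}$ have the same size. *)

From mathcomp Require Import all_boot all_fingroup all_solvable.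
Set Implicit Arguments. Unset Strict Implicit. Unset Printing Implicit Defensive.
Local Open Scope group_scope.

(* Omega is the whole finite type T; G is a permutation group on T acting
   naturally via the action 'P. *)

Definition stab2 (T : finType) (G : {group {perm T}}) (a b : T) : {set {perm T}} :=
  'C_G[a | 'P] :&: 'C_G[b | 'P].

Definition quasi_transitive (T : finType) (G : {group {perm T}}) : Prop :=
  exists t : nat, (1 < t)%N /\
    forall a b : T, a != b -> #|stab2 G a b| = t.

Definition Gorbits (T : finType) (G : {group {perm T}}) : {set {set T}} :=
  orbit 'P G @: [set: T].

Definition three_halves_transitive (T : finType) (G : {group {perm T}})
    (D : {set T}) : Prop :=
  [transitive G, on D | 'P] /\
  forall a, a \in D -> forall x y, x \in D :\ a -> y \in D :\ a ->
    #|orbit 'P 'C_G[a | 'P] x| = #|orbit 'P 'C_G[a | 'P] y|.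

From mathcomp Require Import all_boot all_fingroup all_solvable.
From mathcomp Require Import zify.
Set Implicit Arguments. Unset Strict Implicit. Unset Printing Implicit Defensive.
Local Open Scope group_scope.

(* Let t be the common order of the two-point stabilisers and D a G-orbit.
   For a in D every orbit of G_a on D \ a has length |G_a| / t, which is
   3/2-transitivity. Suppose Q is a nontrivial block system on D. Counting
   orbits of the block stabiliser shows that G_xy fixes the block of y
   pointwise whenever x lies outside it; comparing orders then shows that all
   G_ac (a <> c in D) equal the kernel K of G on D, of order t > 1. A point b
   moved by K lies outside D. Burnside's lemma for G_b on D (elements outside
   K fix at most one point of D, and |G_b :&: K| <= t/2) makes G_b transitive
   on D; then |D| divides |b^G| - 1 while |b^G| divides |D| - 1, which is
   absurd. *)

Lemma dvdn_card_uniform_orbits (aT : finGroupType) (sT : finType)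
    (to : {action aT &-> sT}) (A : {group aT}) (S : {set sT}) k :
  [acts A, on S | to] -> {in S, forall x, #|orbit to A x| = k} -> k %| #|S|.
Proof.
move=> actsAS orbitAk.
rewrite (card_uniform_partition (n := k) _ (orbit_partition actsAS)) ?dvdn_mull //.
by move=> _ /imsetP[x Sx ->]; apply: orbitAk.
Qed.

Lemma leq_double_proper_dvdn d n : d %| n -> d < n -> d.*2 <= n.
Proof. by case/dvdnP=> q ->; case: q => [|[|q]]; rewrite ?mul1n ?ltnn //; lia. Qed.

Lemma acts_setD1 (aT : finGroupType) (sT : finType) (to : {action aT &-> sT})
    (A : {set aT}) (S : {set sT}) b :
  [acts A, on S | to] -> A \subset 'C[b | to] -> [acts A, on S :\ b | to].
Proof. by move=> actsAS cAb; apply: actsD; rewrite // astabs_set1. Qed.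

Lemma card_stab1_transitive (aT : finGroupType) (sT : finType)
    (to : {action aT &-> sT}) (G : {group aT}) (S : {set sT}) x y :
  [transitive G, on S | to] -> x \in S -> y \in S ->
  #|'C_G[x | to]| = #|'C_G[y | to]|.
Proof.
move=> trGS Sx Sy; have S_gt0 : 0 < #|S| by apply/card_gt0P; exists x.
apply/eqP; rewrite -(eqn_pmul2l S_gt0).
by rewrite -{1}(atransP trGS _ Sx) -(atransP trGS _ Sy) !card_orbit_stab.
Qed.

Lemma pblock_act (aT : finGroupType) (sT : finType) (to : {action aT &-> sT})
    (G : {set aT}) (Q : {set {set sT}}) Y x a :
    trivIset Q -> [acts G, on Q | to^*] ->
  Y \in Q -> x \in Y -> a \in G -> pblock Q (to x a) = to^* Y a.
Proof.
move=> tIQ actsQ QY Yx Ga.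
by apply: def_pblock (mem_setact to a Yx); rewrite // (acts_act actsQ).
Qed.

Lemma stab1_sub_block_norm (aT : finGroupType) (sT : finType)
    (to : {action aT &-> sT}) (G : {set aT}) (Q : {set {set sT}}) Y x :
    trivIset Q -> [acts G, on Q | to^*] ->
  Y \in Q -> x \in Y -> 'C_G[x | to] \subset 'N(Y | to).
Proof.
move=> tIQ actsQ QY Yx; apply/subsetP=> a /setIP[Ga /astab1P ax].
rewrite -astab1_set; apply/astab1P.
by have := pblock_act tIQ actsQ QY Yx Ga; rewrite ax (def_pblock tIQ QY Yx).
Qed.

Lemma exists_outside_pblock (T : finType) (Q : {set {set T}}) (D : {set T}) x :
  partition Q D -> 1 < #|Q| -> x \in D -> exists2 z, z \in D & z \notin pblock Q x.
Proof.
case/and3P=> /eqP coverQ tIQ nzQ /card_gt1P[Y1 [Y2 [QY1 QY2 neqY]]] Dx.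
have [Y QY neqYx] : exists2 Y, Y \in Q & Y != pblock Q x.
  case: (eqVneq Y1 (pblock Q x)) => [eqY1 | ]; last by exists Y1.
  by exists Y2; rewrite // -eqY1 eq_sym.
have /set0Pn[z Yz] : Y != set0 by apply: contraNneq nzQ => <-.
exists z; first by rewrite -coverQ; apply/bigcupP; exists Y.
by apply: contra neqYx => /(same_pblock tIQ) <-; rewrite (def_pblock tIQ QY Yz).
Qed.

Lemma mem_stab1 (T : finType) (G : {set {perm T}}) x g :
  (g \in 'C_G[x | 'P]) = (g \in G) && (g x == x).
Proof. by rewrite inE (sameP astab1P eqP). Qed.

Lemma mem_stab2 (T : finType) (G : {group {perm T}}) a b g :
  (g \in stab2 G a b) = [&& g \in G, g a == a & g b == b].
Proof. by rewrite inE !mem_stab1; case: (g \in G). Qed.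

Lemma stab2E (T : finType) (G : {group {perm T}}) a b :
  stab2 G a b = 'C_('C_G[a | 'P])[b | 'P].
Proof. by apply/setP=> g; rewrite mem_stab2 !mem_stab1 andbA. Qed.

Lemma stab2C (T : finType) (G : {group {perm T}}) a b :
  stab2 G a b = stab2 G b a.
Proof. by rewrite /stab2 setIC. Qed.

Section QuasiTransitive.

Variables (T : finType) (G : {group {perm T}}) (t : nat).
Hypothesis card_stab2 : forall a b : T, a != b -> #|stab2 G a b| = t.
Hypothesis t_gt1 : 1 < t.

Let t_gt0 : 0 < t := ltnW t_gt1.

Lemma card_orbit_stab1 a b :
  a != b -> (#|orbit 'P 'C_G[a | 'P] b| * t)%N = #|'C_G[a | 'P]|.
Proof. by move=> neq_ab; rewrite -(card_stab2 neq_ab) stab2E card_orbit_stab. Qed.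

Lemma transitive_three_halves D :
  [transitive G, on D | 'P] -> three_halves_transitive G D.
Proof.
move=> trD; split=> // a Da x y /setD1P[neq_xa _] /setD1P[neq_ya _].
by apply/eqP; rewrite -(eqn_pmul2r t_gt0) !card_orbit_stab1 // eq_sym.
Qed.

Section ImprimitivitySystem.

Variables (D : {set T}) (Q : {set {set T}}).
Hypotheses (trD : [transitive G, on D | 'P]) (partQ : partition Q D)
  (actsQ : [acts G, on Q | 'P^*]).

Let coverQ : cover Q = D. Proof. by case/and3P: partQ => /eqP. Qed.
Let tIQ : trivIset Q. Proof. by case/and3P: partQ. Qed.

Lemma card_orbit_block_norm x Y z :
    Y \in Q -> x \notin Y -> z \in Y ->
  (#|orbit 'P 'N_('C_G[x | 'P])(Y | 'P) z| * t)%N = #|'N_('C_G[x | 'P])(Y | 'P)|.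
Proof.
move=> QY Yx Yz; have neq_xz : x != z by apply: contraNneq Yx => ->.
have stabK : 'C_('N_('C_G[x | 'P])(Y | 'P))[z | 'P] = stab2 G x z.
  rewrite stab2E setIAC; apply/setIidPl.
  apply: subset_trans (stab1_sub_block_norm tIQ actsQ QY Yz).
  exact/setSI/subsetIl.
by rewrite -(card_orbit_stab 'P _ z) stabK card_stab2.
Qed.

Lemma stab2_fixes_block x y :
    x \in D -> y \in D -> x \notin pblock Q y ->
  stab2 G x y \subset 'C(pblock Q y | 'P).
Proof.
move=> Dx Dy; set Y := pblock Q y => Yx.
have Yy : y \in Y by rewrite mem_pblock coverQ.
have QY : Y \in Q by rewrite pblock_mem ?coverQ.
have neq_xy : x != y by apply: contraNneq Yx => ->.
set K := 'N_('C_G[x | 'P])(Y | 'P).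
set k := #|orbit 'P 'C_G[x | 'P] y|; set e := #|orbit 'P K y|.
have orbitK z : z \in Y -> #|orbit 'P K z| = e.
  move=> Yz; apply/eqP; rewrite -(eqn_pmul2r t_gt0).
  by rewrite !card_orbit_block_norm.
have dvd_k_Y1 : k %| #|Y :\ y|.
  apply: (@dvdn_card_uniform_orbits _ _ 'P 'C_G[y | 'P]%G).
    apply: acts_setD1 (subsetIr _ _).
    exact: stab1_sub_block_norm tIQ actsQ QY Yy.
  move=> z /setD1P[neq_zy _]; apply/eqP; rewrite -(eqn_pmul2r t_gt0).
  rewrite card_orbit_stab1 1?eq_sym // card_orbit_stab1 //.
  by rewrite (card_stab1_transitive trD Dx Dy).
have dvd_e_Y : e %| #|Y|.
  by apply: (@dvdn_card_uniform_orbits _ _ 'P K%G); [apply: subsetIr | apply: orbitK].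
have dvd_e_k : e %| k.
  rewrite -(dvdn_pmul2r t_gt0) card_orbit_block_norm // card_orbit_stab1 //.
  exact/cardSg/subsetIl.
(* e divides both #|Y| and, through k, #|Y| - 1 *)
have e1 : e = 1%N.
  have cardY : #|Y| = (#|Y :\ y| + 1)%N by rewrite (cardsD1 y) Yy addnC.
  apply/eqP; rewrite -dvdn1 -(dvdn_addr 1 (dvdn_trans dvd_e_k dvd_k_Y1)) -cardY.
  exact: dvd_e_Y.
apply/subsetP=> g Sg; apply/astabP=> z Yz.
have Kg : g \in K.
  move: Sg; rewrite mem_stab2 => /and3P[Gg gx gy].
  rewrite in_setI mem_stab1 Gg gx (subsetP (stab1_sub_block_norm tIQ actsQ QY Yy)) //.
  by rewrite mem_stab1 Gg gy.
have := mem_orbit 'P z Kg.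
by rewrite (card_orbit1 (etrans (orbitK z Yz) e1)) => /set1P.
Qed.

Lemma exists_pblock_neq x :
  #|Q| < #|D| -> x \in D -> exists2 y, y \in pblock Q x & y != x.
Proof.
move=> Q_ltD Dx; have /exists_inP[Y QY] : [exists Y in Q, 1 < #|Y|].
  apply: contraLR Q_ltD; rewrite negb_exists_in -leqNgt => /forall_inP Y_le1.
  rewrite (card_partition partQ) -sum1_card.
  by apply: leq_sum => Y QY; rewrite leqNgt Y_le1.
case/card_gt1P=> u [v [Yu Yv neq_uv]].
have Du : u \in D by rewrite -coverQ; apply/bigcupP; exists Y.
have [g Gg ->] := atransP2 trD Du Dx.
exists ('P%act v g); last by rewrite (inj_eq (act_inj 'P g)) eq_sym.
by rewrite (pblock_act tIQ actsQ QY Yu Gg) mem_setact.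
Qed.

Lemma stab2_eq_outside_block x y w :
    x \in D -> y \in pblock Q x -> y != x -> w \in D -> w \notin pblock Q x ->
  stab2 G x y = stab2 G x w.
Proof.
move=> Dx By neq_yx Dw Bw.
have neq_xw : x != w by apply: contraNneq Bw => <-; rewrite mem_pblock coverQ.
apply/esym/eqP; rewrite eqEcard (card_stab2 neq_xw) card_stab2 1?eq_sym //.
rewrite leqnn andbT stab2C; apply/subsetP=> g Sg.
have /astabP fixB := subsetP (stab2_fixes_block Dw Dx Bw) g Sg.
by move: Sg; rewrite !mem_stab2 => /and3P[-> _ ->]; rewrite [g y](fixB y By) eqxx.
Qed.

Lemma imprimitive_stab2_sub_kernel :
    1 < #|Q| < #|D| ->
  forall a c, a \in D -> c \in D -> a != c -> stab2 G a c \subset 'C(D | 'P).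
Proof.
case/andP=> Q_gt1 Q_ltD a c Da Dc neq_ac.
have [z0 Dz0 Bz0] := exists_outside_pblock partQ Q_gt1 Da.
have [y0 By0 neq_y0a] := exists_pblock_neq Q_ltD Da.
have stab2_eq w : w \in D -> w != a -> stab2 G a w = stab2 G a z0.
  move=> Dw neq_wa; have [Bw | Bw] := boolP (w \in pblock Q a).
    exact: stab2_eq_outside_block.
  rewrite -(stab2_eq_outside_block Da By0 neq_y0a Dw Bw).
  exact: stab2_eq_outside_block.
rewrite stab2_eq 1?eq_sym //; apply/subsetP=> g Sg; apply/astabP=> w Dw.
have [Bw | Bw] := boolP (w \in pblock Q a).
  rewrite stab2C in Sg.
  exact: (astabP (subsetP (stab2_fixes_block Dz0 Da Bz0) g Sg)).
have neq_wa : w != a by apply: contraNneq Bw => ->; rewrite mem_pblock coverQ.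
by move: Sg; rewrite -(stab2_eq w Dw neq_wa) mem_stab2 => /and3P[_ _ /eqP].
Qed.

End ImprimitivitySystem.

Section Kernel.

Variable D : {set T}.
Hypotheses (trD : [transitive G, on D | 'P]) (D_gt1 : 1 < #|D|).
Hypothesis stab2_sub_kernel :
  forall a c, a \in D -> c \in D -> a != c -> stab2 G a c \subset 'C(D | 'P).

Lemma stab2_eq_kernel a c :
  a \in D -> c \in D -> a != c -> stab2 G a c = 'C_G(D | 'P).
Proof.
move=> Da Dc neq_ac; apply/eqP; rewrite eqEsubset subsetI stab2_sub_kernel //.
rewrite subIset ?subsetIl //=; apply/subsetP=> g /setIP[Gg /astabP fixD].
by rewrite mem_stab2 Gg [g a]fixD // [g c]fixD // !eqxx.
Qed.

Lemma card_kernel : #|'C_G(D | 'P)| = t.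
Proof.
have [a [c [Da Dc neq_ac]]] := card_gt1P D_gt1.
by rewrite -(stab2_eq_kernel Da Dc neq_ac) card_stab2.
Qed.

Lemma sum_card_afix_le (H : {group {perm T}}) :
    H \subset G ->
  \sum_(h in H) #|'Fix_(D | 'P)[h]|
    <= #|H :&: 'C(D | 'P)| * #|D| + #|H :\: 'C(D | 'P)|.
Proof.
move=> sHG; rewrite (big_setID 'C(D | 'P)) /= -sum_nat_const.
rewrite -[#|H :\: _|]sum1_card; apply: leq_add; apply: leq_sum => h.
  by case/setIP=> _ /astabP fixD; apply/subset_leq_card/subsetIl.
case/setDP=> Hh Kh; rewrite leqNgt; apply/negP=> /card_gt1P[a [c []]].
move=> /setIP[Da /afix1P ha] /setIP[Dc /afix1P hc] neq_ac.
apply/negP: Kh; rewrite (subsetP (stab2_sub_kernel Da Dc neq_ac)) //.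
by rewrite mem_stab2 (subsetP sHG) // [h a]ha [h c]hc !eqxx.
Qed.

Lemma notin_kernel_moved b : ~~ ('C_G(D | 'P) \subset 'C[b | 'P]) -> b \notin D.
Proof.
apply: contra => Db; apply: subset_trans (subsetIr _ _) _.
by apply: astabS; rewrite sub1set.
Qed.

Lemma double_card_stab1_kernel_le b :
  ~~ ('C_G(D | 'P) \subset 'C[b | 'P]) -> #|'C_G[b | 'P] :&: 'C(D | 'P)|.*2 <= t.
Proof.
move=> not_cKb; rewrite -card_kernel.
have sub_kernel : 'C_G[b | 'P] :&: 'C(D | 'P) \subset 'C_G(D | 'P).
  exact/setSI/subsetIl.
apply: leq_double_proper_dvdn; first exact: cardSg.
rewrite proper_card // properEneq sub_kernel andbT.
by apply: contraNneq not_cKb => <-; apply: subset_trans (subsetIl _ _) (subsetIr _ _).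
Qed.

Lemma stab1_transitive_kernel_moved b :
  ~~ ('C_G(D | 'P) \subset 'C[b | 'P]) -> [transitive 'C_G[b | 'P], on D | 'P].
Proof.
move=> not_cKb; set Gb := 'C_G[b | 'P].
have neq_b c : c \in D -> b != c.
  by move=> Dc; apply: contraNneq (notin_kernel_moved not_cKb) => ->.
have actsGb : [acts Gb, on D | 'P] := subset_trans (subsetIl _ _) (atrans_acts trD).
have [a Da] : exists a, a \in D by apply/card_gt0P/ltnW.
set s := #|orbit 'P Gb a|.
have s_gt0 : 0 < s by apply/card_gt0P; exists a; apply: orbit_refl.
have cardGb : #|Gb| = (s * t)%N by rewrite card_orbit_stab1 ?neq_b.
set o := #|orbit 'P Gb @: D|.
have cardD : #|D| = (o * s)%N.
  apply: card_uniform_partition (orbit_partition actsGb) => _ /imsetP[c Dc ->].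
  by apply/eqP; rewrite -(eqn_pmul2r t_gt0) -cardGb card_orbit_stab1 ?neq_b.
have o_gt0 : 0 < o by rewrite lt0n; apply: contraTneq D_gt1 => o0; rewrite cardD o0.
set nu := #|Gb :&: 'C(D | 'P)|.
have nu_gt0 : 0 < nu by apply/card_gt0P; exists 1; rewrite !group1.
have nu_le : nu.*2 <= t := double_card_stab1_kernel_le not_cKb.
(* Burnside: o * #|Gb| = sum of fixed points <= nu * #|D| + (#|Gb| - nu) *)
have := @sum_card_afix_le 'C_G[b | 'P]%G (subsetIl _ _).
rewrite /= -/Gb (Frobenius_Cauchy actsGb) -/o -/nu cardGb cardD => count_fix.
have cardGbID := cardsID 'C(D | 'P) Gb; rewrite -/nu cardGb in cardGbID.
have nu_le' : nu.*2 * (o * s) <= t * (o * s) by rewrite leq_mul2r nu_le orbT.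
rewrite atrans_acts_card actsGb; apply/eqP; change (o = 1%N).
move: count_fix cardGbID nu_le'; set r := #|Gb :\: _|; clearbody r o s nu; nia.
Qed.

Lemma kernel_sub_stab1 b : 'C_G(D | 'P) \subset 'C[b | 'P].
Proof.
apply: contraT => not_cKb; have Db := notin_kernel_moved not_cKb.
have trGb := stab1_transitive_kernel_moved not_cKb.
set Gb := 'C_G[b | 'P] in trGb.
have [g Kg /astab1P/eqP moved_b] := subsetPn not_cKb.
have [a Da] : exists a, a \in D by apply/card_gt0P/ltnW.
have neq_ba : b != a by apply: contraNneq Db => ->.
have cardGb : #|Gb| = (#|D| * t)%N.
  by rewrite -(atransP trGb _ Da) -(card_stab2 neq_ba) stab2E card_orbit_stab.
set m := #|orbit 'P G b|.
have cardGa : #|'C_G[a | 'P]| = (m * t)%N.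
  apply/eqP; rewrite -(eqn_pmul2l (ltnW D_gt1)) mulnCA -cardGb.
  by rewrite -{1}(atransP trD _ Da) !card_orbit_stab.
have card_orbitD1 : #|orbit 'P G b :\ b| = m.-1.
  by rewrite /m (cardsD1 b (orbit _ _ _)) orbit_refl.
have m1_gt0 : 0 < m.-1.
  rewrite -card_orbitD1; apply/card_gt0P; exists ('P%act b g).
  by rewrite !inE moved_b mem_orbit // (subsetP (subsetIl _ _) g Kg).
have dvd_D_m1 : #|D| %| m.-1.
  rewrite -card_orbitD1; apply: (@dvdn_card_uniform_orbits _ _ 'P Gb%G).
    apply: acts_setD1 (subsetIr _ _).
    exact: subset_trans (subsetIl _ _) (acts_orbit _ _ (subsetT _)).
  move=> z /setD1P[neq_zb _]; apply/eqP; rewrite -(eqn_pmul2r t_gt0) -cardGb.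
  by rewrite card_orbit_stab1 // eq_sym.
have dvd_m_D1 : m %| #|D|.-1.
  rewrite (cardsD1 a D) Da add1n.
  apply: (@dvdn_card_uniform_orbits _ _ 'P 'C_G[a | 'P]%G).
    exact: acts_setD1 (subset_trans (subsetIl _ _) (atrans_acts trD)) (subsetIr _ _).
  move=> z /setD1P[neq_za _]; apply/eqP; rewrite -(eqn_pmul2r t_gt0) -cardGa.
  by rewrite card_orbit_stab1 // eq_sym.
have := dvdn_leq m1_gt0 dvd_D_m1; have := dvdn_leq _ dvd_m_D1.
move: D_gt1; clear; lia.
Qed.

Lemma stab2_not_sub_kernel : False.
Proof.
have /trivgPn[g Kg ntg] : 'C_G(D | 'P) != 1 by rewrite -cardG_gt1 card_kernel.
apply/(negP ntg)/eqP/permP=> b; rewrite perm1.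
exact: (astab1P (subsetP (kernel_sub_stab1 b) g Kg)).
Qed.

End Kernel.

End QuasiTransitive.

Theorem mainTheorem3 (T : finType) (G : {group {perm T}}) :
  quasi_transitive G ->
  (1 < #|Gorbits G|)%N ->
  forall D : {set T}, D \in Gorbits G ->
    [primitive G, on D | 'P] /\ three_halves_transitive G D.
Proof.
move=> [t [t_gt1 card_stab2]] _ D /imsetP[x _ ->].
have trD := atrans_orbit 'P G x.
split; last exact: (transitive_three_halves card_stab2 t_gt1 trD).
rewrite /primitive trD; apply/existsP=> -[Q /and3P[partQ actsQ Q_bounds]].
have D_gt1 : 1 < #|orbit 'P G x| by case/andP: Q_bounds; apply: ltn_trans.
apply: (stab2_not_sub_kernel card_stab2 t_gt1 trD D_gt1).
exact: (imprimitive_stab2_sub_kernel card_stab2 t_gt1 trD partQ actsQ Q_bounds).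
Qed.
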